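(* Let $\tilde\gamma$ be a closed edge path in the Artin complex $D(B_3)$ with 10 edges whose vertices alternate between type $\hat s_3$ and type $\hat s_2$. If $\tilde\gamma$ is contained in a Falk subcomplex of type $s_3$, then $\tilde\gamma$ is not embedded.
   Context: $A(B_3)=\langle s_1,s_2,s_3 \mid s_1s_2s_1=s_2s_1s_2,\ s_1s_3=s_3s_1,\ s_2s_3s_2s_3=s_3s_2s_3s_2\rangle$ and $W(B_3)$ is its quotient by $s_i^2=1$. For $i=1,2,3$, $\hat s_i$ denotes the standard parabolic subgroup generated by the other two generators. The Artin complex $D(B_3)$ (resp. Coxeter complex $C(B_3)$) has vertices the cosets $g\hat s_i$ in $A(B_3)$ (resp. $W(B_3)$), of type $\hat s_i$, and a set of vertices spans a simplex iff the cosets have nonempty common intersection. Let $\rho:D(B_3)\to C(B_3)$ be induced by $A(B_3)\to W(B_3)$. A Falk subcomplex of type $s_3$: take a reflection $r\in W(B_3)$ conjugate to $s_3$, let $H$ be the subcomplex of $C(B_3)$ fixed pointwise by $r$, choose a component of $C(B_3)\setminus H$, let $U$ be the largest closed subcomplex of $C(B_3)$ contained in it, and take a lift of $U$ along $\rho$ (a subcomplex of $D(B_3)$ mapped isomorphically onto $U$ by $\rho$). *)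

From Stdlib Require Import Relations.
From mathcomp Require Import all_boot.
Set Implicit Arguments. Unset Strict Implicit. Unset Printing Implicit Defensive.

Definition s1 : 'I_3 := @Ordinal 3 0 isT.
Definition s2 : 'I_3 := @Ordinal 3 1 isT.
Definition s3 : 'I_3 := @Ordinal 3 2 isT.

(* a letter (i, b) is s_i (b = false) or s_i^-1 (b = true); group elements are
   represented by words, the product is concatenation *)
Notation letter := ('I_3 * bool)%type.
Notation word := (seq letter).
Definition inv_letter (l : letter) : letter := (l.1, ~~ l.2).
Definition winv (w : word) : word := rev (map inv_letter w).
Definition gen (i : 'I_3) : word := [:: (i, false)].

Definition artinB3_rel (a b : word) : Prop :=
  (a = gen s1 ++ gen s2 ++ gen s1 /\ b = gen s2 ++ gen s1 ++ gen s2) \/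
  (a = gen s1 ++ gen s3 /\ b = gen s3 ++ gen s1) \/
  (a = gen s2 ++ gen s3 ++ gen s2 ++ gen s3 /\
   b = gen s3 ++ gen s2 ++ gen s3 ++ gen s2).

Definition coxeterB3_rel (a b : word) : Prop :=
  artinB3_rel a b \/ exists i, a = gen i ++ gen i /\ b = [::].

(* equality in the group presented by the relations Rel: the congruence on
   words generated by free cancellation and the relations *)
Inductive wcong (Rel : word -> word -> Prop) : word -> word -> Prop :=
| wc_refl w : wcong Rel w w
| wc_sym u v : wcong Rel u v -> wcong Rel v u
| wc_trans u v w : wcong Rel u v -> wcong Rel v w -> wcong Rel u w
| wc_free u l v : wcong Rel (u ++ l :: inv_letter l :: v) (u ++ v)
| wc_rel u a b v : Rel a b -> wcong Rel (u ++ a ++ v) (u ++ b ++ v).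

Definition Aeq := wcong artinB3_rel.
Definition Weq := wcong coxeterB3_rel.

(* h belongs to the standard parabolic subgroup \hat s_i (generated by the
   generators other than s_i), in the group with equality E *)
Definition in_hat (E : word -> word -> Prop) (i : 'I_3) (h : word) : Prop :=
  exists h', E h h' /\ all (fun l : letter => l.1 != i) h'.

(* a vertex (i, g) is the coset g \hat s_i, of type \hat s_i *)
Notation vertex := ('I_3 * word)%type.

Definition in_coset (E : word -> word -> Prop) (v : vertex) (x : word) : Prop :=
  exists h, in_hat E v.1 h /\ E x (v.2 ++ h).

Definition same_vertex (E : word -> word -> Prop) (v w : vertex) : Prop :=
  v.1 = w.1 /\ forall x, in_coset E v x <-> in_coset E w x.

Definition simplex (E : word -> word -> Prop) (s : seq vertex) : Prop :=
  exists x, forall v, v \in s -> in_coset E v x.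

Definition same_simplex (E : word -> word -> Prop) (s t : seq vertex) : Prop :=
  (forall v, v \in s -> exists w, w \in t /\ same_vertex E v w) /\
  (forall w, w \in t -> exists v, v \in s /\ same_vertex E v w).

(* rho : D(B_3) -> C(B_3), induced by A(B_3) -> W(B_3): on representatives it is
   the identity (g \hat s_i |-> image(g) \hat s_i); only the equality changes *)
Definition rho (v : vertex) : vertex := v.

Definition is_reflection_s3 (r : word) : Prop :=
  exists w, Weq r (w ++ gen s3 ++ winv w).

Definition wact (r : word) (v : vertex) : vertex := (v.1, r ++ v.2).

(* vertices of the fixed subcomplex H of r (H is the full subcomplex on them,
   since the action is type preserving) *)
Definition fixedC (r : word) (v : vertex) : Prop := same_vertex Weq (wact r v) v.

Definition adjC (r : word) (v w : vertex) : Prop :=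
  ~ fixedC r v /\ ~ fixedC r w /\ simplex Weq [:: v; w].

Definition componentC (r : word) (v0 : vertex) (v : vertex) : Prop :=
  clos_refl_trans vertex (adjC r) v0 v.

(* U: largest closed subcomplex of C(B_3) contained in that component,
   i.e. the simplices all of whose vertices lie in the component *)
Definition falkU (r : word) (v0 : vertex) (t : seq vertex) : Prop :=
  simplex Weq t /\ forall v, v \in t -> componentC r v0 v.

Definition subcomplexD (L : seq vertex -> Prop) : Prop :=
  [/\ forall s, L s -> simplex Aeq s,
      forall s t, L s -> {subset t <= s} -> L t &
      forall s t, L s -> same_simplex Aeq s t -> L t].

(* L is a lift of U along rho: rho maps L isomorphically onto U *)
Definition lift_of (L U : seq vertex -> Prop) : Prop :=
  [/\ subcomplexD L,
      forall s, L s -> U (map rho s),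
      forall v w, L [:: v] -> L [:: w] ->
        same_vertex Weq (rho v) (rho w) -> same_vertex Aeq v w &
      forall t, U t -> exists s, L s /\ same_simplex Weq (map rho s) t].

Definition falk_subcomplex_s3 (L : seq vertex -> Prop) : Prop :=
  exists r v0, [/\ is_reflection_s3 r, ~ fixedC r v0 & lift_of L (falkU r v0)].

Definition alt_closed_path10 (p : 'I_10 -> vertex) : Prop :=
  [/\ forall k, (p k).1 = s3 \/ (p k).1 = s2,
      forall k, (p k).1 <> (p (ordS k)).1 &
      forall k, simplex Aeq [:: p k; p (ordS k)]].

Definition path_in (L : seq vertex -> Prop) (p : 'I_10 -> vertex) : Prop :=
  forall k, L [:: p k; p (ordS k)].

Definition embedded10 (p : 'I_10 -> vertex) : Prop :=
  forall k l, same_vertex Aeq (p k) (p l) -> k = l.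

From Stdlib Require Import Relations.
From mathcomp Require Import all_boot.
Set Implicit Arguments. Unset Strict Implicit. Unset Printing Implicit Defensive.

(* In C(B_3) a vertex g<s1,s3> of type \hat s_2 has exactly two neighbours of
   type \hat s_3, namely g<s1,s2> and g s3 <s1,s2>.  They are told apart by the
   parity of the number of letters s3 in a representative, which is a
   homomorphism W(B_3) -> Z/2 vanishing on <s1,s2>.  As rho is injective on the
   vertices of a lift, an embedded closed path in a Falk subcomplex maps to an
   embedded closed path in C(B_3); there the five vertices of type \hat s_3 must
   change parity from each one to the next, which is impossible around a cycle
   of odd length. *)

Definition avoids (i : 'I_3) (w : word) : bool := all (fun l : letter => l.1 != i) w.

Lemma inv_letterK : involutive inv_letter.
Proof. by case=> i b; rewrite /inv_letter /= negbK. Qed.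

Lemma winvK : involutive winv.
Proof.
by move=> w; rewrite /winv map_rev revK -map_comp map_id_in // => l _ /=; rewrite inv_letterK.
Qed.

Lemma winv_cons l w : winv (l :: w) = winv w ++ [:: inv_letter l].
Proof. by rewrite /winv /= rev_cons cats1. Qed.

Lemma avoids_cat i u v : avoids i (u ++ v) = avoids i u && avoids i v.
Proof. exact: all_cat. Qed.

Lemma avoids_winv i w : avoids i (winv w) = avoids i w.
Proof. by rewrite /avoids /winv all_rev all_map. Qed.

Section WordCongruence.
Variable Rel : word -> word -> Prop.
Local Notation E := (wcong Rel).

Lemma wcong_cat x y u v : E u v -> E (x ++ u ++ y) (x ++ v ++ y).
Proof.
elim=> {u v} [w | u v _ IH | u v w _ IH1 _ IH2 | u l v | u a b v Hab].
- exact: wc_refl.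
- exact: wc_sym.
- exact: wc_trans IH2.
- rewrite -!catA; have := wc_free Rel (x ++ u) l (v ++ y); by rewrite -!catA.
- rewrite -!catA; have := wc_rel (x ++ u) (v ++ y) Hab; by rewrite -!catA.
Qed.

Lemma wcong_catl x u v : E u v -> E (x ++ u) (x ++ v).
Proof. by move=> /(wcong_cat x [::]); rewrite !cats0. Qed.

Lemma wcong_catr y u v : E u v -> E (u ++ y) (v ++ y).
Proof. exact: wcong_cat [::] y u v. Qed.

Lemma wcong_cat2 u u' v v' : E u u' -> E v v' -> E (u ++ v) (u' ++ v').
Proof. by move=> Hu Hv; apply: wc_trans (wcong_catr v Hu) (wcong_catl u' Hv). Qed.

Lemma wcong_mulwinv w : E (w ++ winv w) [::].
Proof.
elim: w => [|l w IH] /=; first exact: wc_refl.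
rewrite winv_cons catA.
apply: wc_trans (_ : E ([:: l] ++ [::] ++ [:: inv_letter l]) [::]).
  by rewrite -[l :: _]/([:: l] ++ _); apply: wcong_cat.
exact: wc_free Rel [::] l [::].
Qed.

Lemma wcong_winvmul w : E (winv w ++ w) [::].
Proof. by have := wcong_mulwinv (winv w); rewrite winvK. Qed.

Lemma wcong_winv u v : E u v -> E (winv u) (winv v).
Proof.
move=> Huv.
apply: wc_trans (_ : E ((winv u ++ v) ++ winv v) _).
  by rewrite -catA; have := wcong_catl (winv u) (wc_sym (wcong_mulwinv v)); rewrite cats0.
apply: wc_trans (_ : E ((winv u ++ u) ++ winv v) _).
  by apply/wcong_catr/wcong_catl/wc_sym.
exact: wcong_catr (wcong_winvmul u).
Qed.

Lemma wcong_solve x u h : E x (u ++ h) -> E u (x ++ winv h).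
Proof.
move=> Hx; apply: wc_trans (_ : E ((u ++ h) ++ winv h) _).
  by rewrite -catA; have := wcong_catl u (wc_sym (wcong_mulwinv h)); rewrite cats0.
exact/wcong_catr/wc_sym.
Qed.

Lemma in_hat_avoids i h : avoids i h -> in_hat E i h.
Proof. by move=> Ah; exists h; split; first exact: wc_refl. Qed.

Lemma in_hat_cat i h k : in_hat E i h -> in_hat E i k -> in_hat E i (h ++ k).
Proof.
move=> [h' [Eh Ah]] [k' [Ek Ak]]; exists (h' ++ k'); split; first exact: wcong_cat2.
by rewrite all_cat Ah Ak.
Qed.

Lemma in_hat_winv i h : in_hat E i h -> in_hat E i (winv h).
Proof.
move=> [h' [Eh Ah]]; exists (winv h'); split; first exact: wcong_winv.
by rewrite -/(avoids i _) avoids_winv.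
Qed.

Lemma same_vertex_mulr (v w : vertex) k :
  v.1 = w.1 -> in_hat E v.1 k -> E w.2 (v.2 ++ k) -> same_vertex E v w.
Proof.
move=> Evw Hk Hw; split=> // x; split.
- move=> [h [Hh Hx]]; exists (winv k ++ h); split.
    by rewrite -Evw; apply: in_hat_cat => //; apply: in_hat_winv.
  by apply: wc_trans Hx _; rewrite catA; apply/wcong_catr/wcong_solve.
- move=> [h [Hh Hx]]; exists (k ++ h); split; first by rewrite -Evw in Hh; apply: in_hat_cat.
  by apply: wc_trans Hx _; rewrite catA; apply: wcong_catr.
Qed.

Lemma simplex2_transition (v w : vertex) : simplex E [:: v; w] ->
  exists h k, [/\ avoids v.1 h, avoids w.1 k & E w.2 (v.2 ++ h ++ winv k)].
Proof.
move=> [x Hx].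
have [h0 [[h [Eh Ah]] Ev]] := Hx v (mem_head _ _).
have [k0 [[k [Ek Ak]] Ew]] := Hx w (mem_last v [:: w]).
exists h, k; split=> //; rewrite catA.
apply: wc_trans (wcong_solve (wc_trans Ew (wcong_catl _ Ek))) _.
exact/wcong_catr/(wc_trans Ev)/wcong_catl.
Qed.

End WordCongruence.

Definition odd_s3 (w : word) : bool := odd (count (fun l : letter => l.1 == s3) w).

Lemma odd_s3_cat u v : odd_s3 (u ++ v) = odd_s3 u (+) odd_s3 v.
Proof. by rewrite /odd_s3 count_cat oddD. Qed.

Lemma odd_s3_winv w : odd_s3 (winv w) = odd_s3 w.
Proof. by rewrite /odd_s3 /winv count_rev count_map. Qed.

Lemma odd_s3_avoids w : avoids s3 w -> odd_s3 w = false.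
Proof.
move=> Aw; rewrite /odd_s3 (eq_in_count (a2 := pred0)) ?count_pred0 // => l.
by move/(allP Aw)/negbTE.
Qed.

Lemma Weq_odd_s3 u v : Weq u v -> odd_s3 u = odd_s3 v.
Proof.
elim=> {u v} // [u v w _ -> _ -> // | u l v | u a b v Hab].
- by rewrite !odd_s3_cat /odd_s3 /= !oddD addKb.
- rewrite !odd_s3_cat; congr (_ (+) (_ (+) _)).
  by case: Hab => [[[-> ->]|[[-> ->]|[-> ->]]]|[i [-> ->]]] //; rewrite odd_s3_cat addbb.
Qed.

Lemma Weq_gen_inv i : Weq [:: (i, true)] (gen i).
Proof.
apply: wc_trans (_ : Weq [:: (i, true); (i, false); (i, false)] _).
  apply: wc_sym; have := @wc_rel coxeterB3_rel [:: (i, true)] (gen i ++ gen i) [::] [::].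
  by rewrite !cats0; apply; right; exists i.
exact: wc_free coxeterB3_rel [::] (i, true) [:: (i, false)].
Qed.

Lemma Weq_gen_gen i w : Weq ((i, false) :: (i, false) :: w) w.
Proof. by apply: (@wc_rel _ [::] (gen i ++ gen i) [::] w); right; exists i. Qed.

Lemma Weq_s3s1 w : Weq ((s3, false) :: (s1, false) :: w) ((s1, false) :: (s3, false) :: w).
Proof.
by apply/wc_sym/(@wc_rel _ [::] (gen s1 ++ gen s3) (gen s3 ++ gen s1) w); left; right; left.
Qed.

Definition s1s3_word (a b : bool) : word :=
  (if a then gen s1 else [::]) ++ (if b then gen s3 else [::]).

Lemma Weq_avoids_s2 w : avoids s2 w -> exists a, Weq w (s1s3_word a (odd_s3 w)).
Proof.
elim: w => [|[i e] w IH] /=; first by exists false; apply: wc_refl.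
case/andP=> i_neq_s2 /IH [a Ha].
have Hl : Weq ((i, e) :: w) ((i, false) :: s1s3_word a (odd_s3 w)).
  apply: wc_trans (wcong_catl [:: (i, e)] Ha) _.
  by case: e; [apply: wcong_catr (Weq_gen_inv i) | apply: wc_refl].
rewrite -[(i, e) :: w]/([:: (i, e)] ++ w) odd_s3_cat {Ha}.
have [] : i = s1 \/ i = s3.
  by case: i i_neq_s2 {Hl} => [[|[|[|//]]] ?] // _; [left | right]; apply: val_inj.
all: move=> ?; subst i; rewrite [odd_s3 [:: _]]/odd_s3 /=.
- case: a Hl => Hl; last by exists true.
  by exists false; apply: wc_trans Hl (Weq_gen_gen _ _).
- case: a (odd_s3 w) Hl => [] [] Hl /=.
  + exists true; apply: wc_trans Hl _.
    exact: wc_trans (Weq_s3s1 _) (wcong_catl [:: _] (Weq_gen_gen s3 [::])).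
  + by exists true; apply: wc_trans Hl (Weq_s3s1 _).
  + by exists false; apply: wc_trans Hl (Weq_gen_gen _ _).
  + by exists false.
Qed.

Lemma in_hat_s3_even w : avoids s2 w -> odd_s3 w = false -> in_hat Weq s3 w.
Proof.
move=> /Weq_avoids_s2 [a Ha] Ew; rewrite Ew in Ha.
by exists (s1s3_word a false); split=> //; case: a {Ha}.
Qed.

Lemma same_vertex_of_common_s2_neighbour (a b c : vertex) :
  a.1 = s3 -> b.1 = s2 -> c.1 = s3 ->
  simplex Weq [:: a; b] -> simplex Weq [:: b; c] -> odd_s3 a.2 = odd_s3 c.2 ->
  same_vertex Weq a c.
Proof.
move=> ta tb tc /simplex2_transition [h1 [h2 [A1 A2 Eb]]].
move=> /simplex2_transition [h4 [h3 [A4 A3 Ec]]] Eodd.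
rewrite ta in A1; rewrite tb in A2 A4; rewrite tc in A3.
(* [c.2 = a.2 h1 m h3^-1] with [m] in <s1,s3>; equal parities force [m] into <s1>. *)
set m := winv h2 ++ h4.
have Am : avoids s2 m by rewrite avoids_cat avoids_winv A2 A4.
have Ec' : Weq c.2 (a.2 ++ h1 ++ m ++ winv h3).
  by apply: wc_trans Ec (wc_trans (wcong_catr _ Eb) _); rewrite /m -!catA; apply: wc_refl.
clearbody m.
have Em : odd_s3 m = false.
  move: Eodd; rewrite (Weq_odd_s3 Ec') !odd_s3_cat odd_s3_winv.
  by rewrite (odd_s3_avoids A1) (odd_s3_avoids A3); case: (odd_s3 a.2); case: (odd_s3 m).
apply: (same_vertex_mulr (k := h1 ++ m ++ winv h3)) Ec'; first by rewrite ta tc.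
rewrite ta; apply: in_hat_cat; first exact: in_hat_avoids.
by apply: in_hat_cat; [apply: in_hat_s3_even | apply/in_hat_winv/in_hat_avoids].
Qed.

Lemma iter_flip (T : Type) (s : T -> T) (P : T -> Prop) (f : T -> bool) :
  (forall x, P x -> P (s x) /\ f (s x) = ~~ f x) ->
  forall n x, P x -> P (iter n s x) /\ f (iter n s x) = odd n (+) f x.
Proof.
move=> Hs; elim=> [|n IH] x Px //=.
have [Pn fn] := IH x Px; have [Ps ->] := Hs _ Pn.
by rewrite fn; split=> //; case: (odd n); case: (f x).
Qed.

Lemma ordS2_neq (k : 'I_10) : ordS (ordS k) <> k.
Proof. by move=> /(congr1 val); case: k => [[|[|[|[|[|[|[|[|[|[|//]]]]]]]]]] ?]. Qed.

Lemma iter_ordS2 (k : 'I_10) : iter 5 (fun j => ordS (ordS j)) k = k.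
Proof. by apply: val_inj; case: k => [[|[|[|[|[|[|[|[|[|[|//]]]]]]]]]] ?]. Qed.

Lemma alt_cycle10_not_injective (p : 'I_10 -> vertex) :
  (forall k, (p k).1 = s3 \/ (p k).1 = s2) ->
  (forall k, (p k).1 <> (p (ordS k)).1) ->
  (forall k, simplex Weq [:: p k; p (ordS k)]) ->
  ~ (forall k l, same_vertex Weq (p k) (p l) -> k = l).
Proof.
move=> Htype Halt Hsimp Hinj.
have next_s2 k : (p k).1 = s3 -> (p (ordS k)).1 = s2.
  by move=> t; have := Halt k; case: (Htype (ordS k)) => // ->; rewrite t.
have next_s3 k : (p k).1 = s2 -> (p (ordS k)).1 = s3.
  by move=> t; have := Halt k; case: (Htype (ordS k)) => // ->; rewrite t.
have flip k : (p k).1 = s3 -> (p (ordS (ordS k))).1 = s3 /\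
    odd_s3 (p (ordS (ordS k))).2 = ~~ odd_s3 (p k).2.
  move=> t3; have t2 := next_s2 _ t3; have t3' := next_s3 _ t2; split=> //.
  case: (eqVneq (odd_s3 (p k).2) (odd_s3 (p (ordS (ordS k))).2)) => [Eodd | ].
    have := same_vertex_of_common_s2_neighbour t3 t2 t3' (Hsimp _) (Hsimp _) Eodd.
    by move/Hinj/esym/ordS2_neq.
  by case: (odd_s3 _); case: (odd_s3 _).
have [k0 t0] : exists k, (p k).1 = s3.
  by case: (Htype ord0) => t; [exists ord0 | exists (ordS ord0); apply: next_s3].
have [_] := @iter_flip _ (fun j => ordS (ordS j)) (fun k => (p k).1 = s3)
  (fun k => odd_s3 (p k).2) flip 5 k0 t0.
by rewrite iter_ordS2 /=; case: (odd_s3 _).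
Qed.

Theorem mainTheorem14 (L : seq vertex -> Prop) (p : 'I_10 -> vertex) :
  falk_subcomplex_s3 L -> alt_closed_path10 p -> path_in L p -> ~ embedded10 p.
Proof.
move=> [r [v0 [_ _ [[_ L_closed _] L_to_U L_inj _]]]] [Htype Halt _] Hpath Hemb.
have vertex_in_L k : L [:: p k].
  by apply: L_closed (Hpath k) _ => v; rewrite inE => /eqP ->; apply: mem_head.
apply: (alt_cycle10_not_injective Htype Halt).
  by move=> k; case: (L_to_U _ (Hpath k)).
by move=> k l /(L_inj _ _ (vertex_in_L k) (vertex_in_L l)) /Hemb.
Qed.
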